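(* Let $1\le t\le n$. The Alexander dual $I_t(L_n)^\vee$ has minimal monomial generating set $\{x_F: F\in C_{n,t}\}$. Writing $n=(t+1)p+q$ with $0\le q\le t$, the largest degree of a minimal generator of $I_t(L_n)^\vee$ equals $2p$ if $q<t$ and $2p+1$ if $q=t$.
   Context: $K$ is a field, $S=K[x_1,\ldots,x_n]$, $I_t(L_n)=(u_1,\ldots,u_{n-t+1})$ with $u_i=x_ix_{i+1}\cdots x_{i+t-1}$, $x_F=\prod_{i\in F}x_i$. The Alexander dual of a squarefree monomial ideal with minimal generators $x_{G_1},\ldots,x_{G_m}$ is generated by all $x_C$ where $C\subseteq[n]$ meets every $G_j$. $C_{n,t}$ is the set of subsets $\{i_1<\cdots<i_r\}\subseteq[n]$ with: (1) $1\le i_1\le t$; (2) $i_2>t$; (3) $1\le i_{j+1}-i_j\le t$ for $1\le j\le r-1$; (4) $i_{j+2}-i_j>t$ for $1\le j\le r-2$; (5) $i_{r-1}<n-t+1$; (6) $n-t+1\le i_r\le n$ (conditions referring to nonexistent indices are vacuous). *)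

(* A monomial x_1^{a_1}...x_n^{a_n} is encoded by its exponent vector
   a : {ffun 'I_n -> nat}; the ordinal i : 'I_n stands for the variable x_{i+1}.
   A monomial ideal is described by a (possibly infinite) set of monomial
   generators; a monomial lies in it iff it is divisible by some generator. *)
From mathcomp Require Import all_boot.
Set Implicit Arguments. Unset Strict Implicit. Unset Printing Implicit Defensive.

Definition monomial (n : nat) := {ffun 'I_n -> nat}.

Definition mdvd n (a b : monomial n) : bool := [forall i, a i <= b i].

Definition mdeg n (a : monomial n) : nat := \sum_(i < n) a i.

Definition xF n (F : {set 'I_n}) : monomial n := [ffun i => nat_of_bool (i \in F)].

Definition in_mideal n (gens : monomial n -> Prop) (m : monomial n) : Prop :=
  exists2 g, gens g & mdvd g m.

(* m is a minimal monomial generator of the monomial ideal generated by gens: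
   m is in the ideal and no other monomial of the ideal divides m.
   (The minimal monomial generating set of a monomial ideal is exactly the set
   of such m.) *)
Definition min_mgen n (gens : monomial n -> Prop) (m : monomial n) : Prop :=
  in_mideal gens m /\
  forall m', in_mideal gens m' -> mdvd m' m -> m' = m.

(* Alexander dual of the squarefree monomial ideal minimally generated by the
   x_G, G in Gs: generated by all x_C with C meeting every G. *)
Definition alex_dual_gens n (Gs : {set {set 'I_n}}) (m : monomial n) : Prop :=
  exists2 C : {set 'I_n}, (forall G, G \in Gs -> C :&: G != set0) & m = xF C.

(* support of u_i = x_i x_{i+1} ... x_{i+t-1}, for 1 <= i <= n-t+1;
   here k = i-1 ranges over 0 <= k < n-t+1 (0-based ordinals k..k+t-1). *)
Definition path_supp n t (k : nat) : {set 'I_n} :=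
  [set j : 'I_n | (k <= j) && (j < k + t)].

Definition It_Ln_supps n t : {set {set 'I_n}} :=
  [set path_supp n t (nat_of_ord k) | k : 'I_(n - t + 1)].

Definition elts1 n (F : {set 'I_n}) : seq nat :=
  sort leq [seq (nat_of_ord i).+1 | i <- enum F].

(* F in C_{n,t}; with s = [i_1; ...; i_r], s`_k = i_{k+1}.  r >= 1 is required
   (condition (6) refers to i_r). *)
Definition in_Cnt n t (F : {set 'I_n}) : Prop :=
  let s := elts1 F in
  let r := size s in
  [/\ 0 < r,
   [/\ 
      (1 <= nth 0 s 0 <= t) &                                          (* (1) *)
      (1 < r -> t < nth 0 s 1)],                                         (* (2) *)
      (forall k, k.+1 < r -> 1 <= nth 0 s k.+1 - nth 0 s k <= t),     (* (3) *)
      (forall k, k.+2 < r -> t < nth 0 s k.+2 - nth 0 s k) &         (* (4) *)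
      [/\ (1 < r -> nth 0 s (r - 2) < n - t + 1)                         (* (5) *)
    & (n - t + 1 <= nth 0 s (r - 1) <= n)]].                              (* (6) *)
Arguments in_Cnt : clear implicits.

From mathcomp Require Import zify.
From mathcomp Require Import all_boot.
Set Implicit Arguments. Unset Strict Implicit. Unset Printing Implicit Defensive.

(* The minimal generators of the Alexander dual of a squarefree monomial ideal
   are the x_F for the minimal transversals F of its supports, and a
   transversal is minimal iff each of its elements i has a private edge,
   meeting F only in i.  For the windows {k+1, ..., k+t} and
   F = {i_1 < ... < i_r}, covering means i_1 <= t, gaps at most t and
   i_r > n - t, while i_j has a private window iff the window starting at
   max(i_(j-1), i_j - t) works, i.e. iff i_(j-1) <= n - t and
   i_(j+1) - i_(j-1) > t: together these are conditions (1)-(6).  By (1), (2)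
   and (4), i_j is at least the j-th term of 1, t+1, t+2, 2t+2, 2t+3, ...;
   comparing with i_r <= n and i_(r-1) <= n - t bounds r, and that sequence
   itself, cut at the bound, is in C_(n,t). *)

Section Transversals.
Variable T : finType.
Implicit Types (Gs : {set {set T}}) (C F G : {set T}).

Definition transversal Gs C := [forall G in Gs, C :&: G != set0].

Definition minimal_transversal Gs F :=
  transversal Gs F /\ forall C, transversal Gs C -> C \subset F -> C = F.

Lemma minimal_transversalP Gs F :
  minimal_transversal Gs F <->
  transversal Gs F /\ forall i, i \in F -> exists2 G, G \in Gs & F :&: G = [set i].
Proof.
split=> [[trF minF] | [trF priv]]; split=> //.
- move=> i iF; have : ~~ transversal Gs (F :\ i).
    by apply/negP => /minF /(_ (subsetDl F _)) /setP /(_ i); rewrite !inE eqxx iF.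
  rewrite negb_forall_in => /exists_inP [G GGs /negPn /eqP FiG0].
  have onlyi x : x \in F :&: G -> x = i.
    rewrite inE => /andP [xF xG]; apply/eqP; apply: contraT => xi.
    have : x \in (F :\ i) :&: G by rewrite !inE xi xF xG.
    by rewrite FiG0 inE.
  exists G => //.
  have [y yFG] := set0Pn _ (forall_inP trF G GGs).
  have iFG : i \in F :&: G by rewrite -(onlyi y yFG).
  apply/eqP; rewrite eqEsubset sub1set iFG andbT.
  by apply/subsetP => x /onlyi ->; rewrite inE.
- move=> C trC sCF; apply/eqP; rewrite eqEsubset sCF; apply/subsetP => i iF.
  have [G GGs FG] := priv i iF.
  have [x] := set0Pn _ (forall_inP trC G GGs); rewrite inE => /andP [xC xG].
  have : x \in F :&: G by rewrite inE (subsetP sCF _ xC) xG.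
  by rewrite FG inE => /eqP <-.
Qed.

End Transversals.

Lemma mdvd_refl n (a : monomial n) : mdvd a a.
Proof. exact/forallP. Qed.

Lemma mdvd_trans n (a b c : monomial n) : mdvd a b -> mdvd b c -> mdvd a c.
Proof.
by move=> /forallP ab /forallP bc; apply/forallP => i; apply: leq_trans (ab i) (bc i).
Qed.

Lemma mdvd_anti n (a b : monomial n) : mdvd a b -> mdvd b a -> a = b.
Proof.
by move=> /forallP ab /forallP ba; apply/ffunP => i; apply/eqP; rewrite eqn_leq ab ba.
Qed.

Lemma mdvd_xF n (A B : {set 'I_n}) : mdvd (xF A) (xF B) = (A \subset B).
Proof.
apply/forallP/subsetP => [AB i iA | AB i].
  by have := AB i; rewrite !ffunE iA; case: (i \in B).
by rewrite !ffunE; case: (boolP (i \in A)) => // /AB ->.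
Qed.

Lemma xF_inj n : injective (@xF n).
Proof.
move=> A B eAB; apply/eqP; rewrite eqEsubset -!mdvd_xF eAB.
by rewrite mdvd_refl.
Qed.

Lemma mdeg_xF n (F : {set 'I_n}) : mdeg (xF F) = #|F|.
Proof.
rewrite /mdeg -sum1_card [RHS]big_mkcond /=; apply: eq_bigr => i _.
by rewrite ffunE; case: (i \in F).
Qed.

Lemma min_mgen_alex_dualP n (Gs : {set {set 'I_n}}) (m : monomial n) :
  min_mgen (alex_dual_gens Gs) m <-> exists2 F, minimal_transversal Gs F & m = xF F.
Proof.
have dual_xF C : transversal Gs C -> in_mideal (alex_dual_gens Gs) (xF C).
  by move=> /forall_inP trC; exists (xF C); [exists C | exact: mdvd_refl].
split.
- move=> [[_ [C /forall_inP trC ->] Cm] minm].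
  have mC := minm _ (dual_xF C trC) Cm.
  exists C => //; split=> // C' trC' sC'C.
  apply: xF_inj; rewrite mC; apply: minm; first exact: dual_xF.
  by rewrite -mC mdvd_xF.
- move=> [F [trF minF] ->]; split; first exact: dual_xF.
  move=> m' [_ [C /forall_inP trC ->] CF'] F'F.
  have eCF : C = F by apply: minF => //; rewrite -mdvd_xF; apply: mdvd_trans CF' F'F.
  by subst C; apply: mdvd_anti.
Qed.

Lemma mem_elts1 n (F : {set 'I_n}) (i : 'I_n) : (i.+1 \in elts1 F) = (i \in F).
Proof.
rewrite /elts1 mem_sort; apply/mapP/idP => [[j] | iF]; last by exists i; rewrite ?mem_enum.
by rewrite mem_enum => jF [/val_inj ->].
Qed.

Lemma elts1P n (F : {set 'I_n}) x : x \in elts1 F -> exists2 i : 'I_n, i \in F & x = i.+1.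
Proof. by rewrite /elts1 mem_sort => /mapP [i]; rewrite mem_enum; exists i. Qed.

Section PathIdeal.
Variables n t : nat.
Implicit Type F : {set 'I_n}.

(* (k, k + t] is the support of u_(k+1), shifted to the 1-based labels of elts1. *)
Definition window_cover (s : seq nat) :=
  forall k, k < n - t + 1 -> has (fun x => k < x <= k + t) s.

Definition private_window (s : seq nat) x := exists2 k, k < n - t + 1 &
  k < x <= k + t /\ forall y, y \in s -> k < y <= k + t -> y = x.

Lemma mem_path_supp k (j : 'I_n) : (j \in path_supp n t k) = (k <= j < k + t).
Proof. by rewrite inE. Qed.

Lemma path_supp_It_Ln k : k < n - t + 1 -> path_supp n t k \in It_Ln_supps n t.
Proof. by move=> kn; apply/imsetP; exists (Ordinal kn). Qed.

Lemma transversal_It_Ln F : transversal (It_Ln_supps n t) F <-> window_cover (elts1 F).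
Proof.
split=> [/forall_inP trF k kn | cover].
- have /set0Pn [j] := trF _ (path_supp_It_Ln kn).
  rewrite inE mem_path_supp => /andP [jF jk]; apply/hasP.
  by exists j.+1; [rewrite mem_elts1 | lia].
- apply/forall_inP => _ /imsetP [k _ ->]; apply/set0Pn.
  have /hasP [_ /elts1P [i iF ->] ik] := cover k (ltn_ord k).
  by exists i; rewrite inE mem_path_supp iF; lia.
Qed.

Lemma private_edge_It_Ln F (i : 'I_n) : i \in F ->
  (exists2 G, G \in It_Ln_supps n t & F :&: G = [set i]) <->
  private_window (elts1 F) i.+1.
Proof.
move=> iF; split.
- move=> [_ /imsetP [k _ ->] Fk]; exists k; first exact: ltn_ord.
  have := set11 i; rewrite -Fk inE mem_path_supp => /andP [_ ik].
  split=> [|_ /elts1P [j jF ->] jk]; first by lia.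
  have : j \in F :&: path_supp n t k by rewrite inE jF mem_path_supp; lia.
  by rewrite Fk inE => /eqP ->.
- move=> [k kn [ik onlyi]]; exists (path_supp n t k); first exact: path_supp_It_Ln.
  apply/setP => j; rewrite inE mem_path_supp inE.
  apply/andP/eqP => [[jF jk] | ->]; last by split=> //; lia.
  by apply/val_inj/succn_inj/onlyi; rewrite ?mem_elts1 //; lia.
Qed.

Lemma minimal_transversal_It_Ln_windows F :
  minimal_transversal (It_Ln_supps n t) F <->
  window_cover (elts1 F) /\ forall x, x \in elts1 F -> private_window (elts1 F) x.
Proof.
rewrite minimal_transversalP transversal_It_Ln; split=> -[cover priv]; split=> //.
- by move=> _ /elts1P [i iF ->]; apply/private_edge_It_Ln/priv.
- by move=> i iF; apply/private_edge_It_Ln/priv; rewrite ?mem_elts1.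
Qed.

End PathIdeal.

Definition Cnt_seq n t (s : seq nat) : Prop :=
  let r := size s in
  [/\ 0 < r,
      [/\ 1 <= nth 0 s 0 <= t & (1 < r -> t < nth 0 s 1)],
      (forall k, k.+1 < r -> 1 <= nth 0 s k.+1 - nth 0 s k <= t),
      (forall k, k.+2 < r -> t < nth 0 s k.+2 - nth 0 s k) &
      [/\ (1 < r -> nth 0 s (r - 2) < n - t + 1) & (n - t + 1 <= nth 0 s (r - 1) <= n)]].

Lemma in_CntE n t F : in_Cnt n t F = Cnt_seq n t (elts1 F).
Proof. by []. Qed.

Section SortedWindows.
Variables (n t : nat) (s : seq nat).
Hypotheses (t_pos : 0 < t) (s_sorted : sorted ltn s) (s_range : all (fun x => 0 < x <= n) s).
Local Notation r := (size s).
Local Notation "u `_ i" := (nth 0 u i) : nat_scope.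

Lemma ltn_nth i j : i < r -> j < r -> (s`_i < s`_j) = (i < j).
Proof.
move=> ir jr; apply/idP/idP => [|ij]; last first.
  by apply: (sorted_ltn_nth ltn_trans 0 s_sorted).
apply: contraLR; rewrite -!leqNgt leq_eqVlt => /orP [/eqP -> // | ji].
by apply/ltnW/(sorted_ltn_nth ltn_trans 0 s_sorted); rewrite ?inE.
Qed.

Lemma leq_nth i j : i < r -> j < r -> (s`_i <= s`_j) = (i <= j).
Proof. by move=> ir jr; rewrite leqNgt ltn_nth // -leqNgt. Qed.

Lemma nth_range j : j < r -> 0 < s`_j <= n.
Proof. by move=> jr; apply: (allP s_range); apply: mem_nth. Qed.

Lemma mem_nthP x : x \in s -> exists2 j, j < r & x = s`_j.
Proof. by move=> /(nthP 0) [j jr <-]; exists j. Qed.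

Lemma has_nth (P : pred nat) : has P s -> exists2 j, j < r & P s`_j.
Proof. by move=> /hasP [_ /mem_nthP [j jr ->]]; exists j. Qed.

Lemma window_coverP : window_cover n t s <->
  [/\ 0 < r, s`_0 <= t, (forall k, k.+1 < r -> s`_k.+1 - s`_k <= t) & n - t + 1 <= s`_(r - 1)].
Proof.
split=> [cover | [r0 s0 gap last] k kn].
- have /has_nth [i ir /= i0] := cover 0 ltac:(lia).
  have r0 : 0 < r := leq_ltn_trans (leq0n i) ir.
  split=> //.
  + have : s`_0 <= s`_i by rewrite leq_nth.
    lia.
  + move=> k kr; rewrite leqNgt; apply/negP => gap.
    have := nth_range kr; have := nth_range (ltnW kr) => rk rk1.
    have /has_nth [j jr /= jk] := cover s`_k ltac:(lia).
    have kj : k < j by rewrite -ltn_nth //; lia.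
    by have := leq_nth kr jr; rewrite kj; lia.
  + have /has_nth [j jr /= jn] := cover (n - t) ltac:(lia).
    have : s`_j <= s`_(r - 1) by rewrite leq_nth; lia.
    lia.
- apply/hasP; case: (boolP (has (fun x => k < x) s)) => [above | /hasPn none]; last first.
    have rl : r - 1 < r by lia.
    have : ~~ (k < s`_(r - 1)) by apply: none; exact: mem_nth rl.
    lia.
  have ir : find (fun x => k < x) s < r by rewrite -has_find.
  have ki : k < s`_(find (fun x => k < x) s) := nth_find 0 above.
  exists s`_(find (fun x => k < x) s); first exact: mem_nth.
  move: ir ki; case: (find _ _) (@before_find _ 0 (fun x => k < x) s) => [|i] before ir ki.
    by lia.
  by have := before i (ltnSn i); have := gap i ir; lia.
Qed.

Lemma nth_inj i j : i < r -> j < r -> s`_i = s`_j -> i = j.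
Proof.
by move=> ir jr eij; apply/eqP; rewrite eqn_leq -(leq_nth ir jr) -(leq_nth jr ir) eij leqnn.
Qed.

Lemma prev_ltn j : j < r -> (0 :: s)`_j < s`_j.
Proof.
case: j => [|j] jr /=; first by have := nth_range jr; lia.
by rewrite ltn_nth // ltnW.
Qed.

Lemma leq_prev i j : i < j -> j < r -> s`_i <= (0 :: s)`_j.
Proof. by case: j => [|j] //= ij jr; rewrite leq_nth; lia. Qed.

(* (0 :: s)`_j is the predecessor of s`_j, or 0; if any window is private to
   s`_j, so is the one starting at maxn (0 :: s)`_j (s`_j - t). *)
Lemma private_window_nthP j : j < r ->
  private_window n t s s`_j <->
  (0 :: s)`_j < n - t + 1 /\ (j.+1 < r -> (0 :: s)`_j + t < s`_j.+1).
Proof.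
move=> jr; have pj := prev_ltn jr; split=> [[k kn [jk onlyj]] | [pn pnext]].
- have outside i : i < r -> i != j -> (s`_i <= k) || (k + t < s`_i).
    move=> ir; apply: contraR; rewrite negb_or -ltnNge -leqNgt => ki.
    by apply/eqP/(nth_inj ir jr)/onlyj; rewrite ?mem_nth.
  have pk : (0 :: s)`_j <= k.
    case: j jr jk outside pj {onlyj} => [|j] jr jk outside //= pj.
    by have := outside j (ltnW jr) (negbT (ltn_eqF (ltnSn j))); lia.
  split=> [|jr1]; first by lia.
  have := ltn_nth jr jr1; rewrite ltnSn => jj1.
  by have := outside j.+1 jr1 (negbT (gtn_eqF (ltnSn j))); lia.
- exists (maxn (0 :: s)`_j (s`_j - t)).
    by have := nth_range jr; lia.
  split=> [|_ /mem_nthP [i ir ->] ik]; first by have := nth_range jr; lia.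
  case: (ltngtP i j) => [ij | ji | -> //].
  + by have := leq_prev ij jr; lia.
  + have jr1 : j.+1 < r := leq_ltn_trans ji ir.
    have : s`_j < s`_j.+1 by rewrite ltn_nth.
    have : s`_j.+1 <= s`_i by rewrite leq_nth.
    by have := pnext jr1; lia.
Qed.

Lemma all_private_windowsP :
  (forall x, x \in s -> private_window n t s x) <->
  [/\ 1 < r -> t < s`_1, forall k, k.+2 < r -> t < s`_k.+2 - s`_k
     & 1 < r -> s`_(r - 2) < n - t + 1].
Proof.
split=> [priv | [next0 next last] _ /mem_nthP [j jr ->]].
- have privP j (jr : j < r) := iffLR (private_window_nthP jr) (priv _ (mem_nth 0 jr)).
  split=> [r1 | k kr | r1].
  + by have [_] := privP 0 (ltnW r1); move=> /(_ r1) /=; lia.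
  + by have [_] := privP k.+1 (ltnW kr); move=> /(_ kr) /=; lia.
  + have [+ _] := privP (r - 1) ltac:(lia).
    by have -> : r - 1 = (r - 2).+1 by lia.
- apply/private_window_nthP => //; case: j jr => [|j] jr /=; first by split=> //; lia.
  split=> [|jr2]; last by have := next j jr2; lia.
  have : s`_j <= s`_(r - 2) by rewrite leq_nth; lia.
  by have := last ltac:(lia); lia.
Qed.

Lemma Cnt_seqP : Cnt_seq n t s <->
  window_cover n t s /\ forall x, x \in s -> private_window n t s x.
Proof.
rewrite window_coverP all_private_windowsP.
have lower0 : 0 < r -> 1 <= s`_0 by move=> r0; have := nth_range r0; lia.
have upper : 0 < r -> s`_(r - 1) <= n by move=> r0; have := nth_range (_ : r - 1 < r); lia.
have gap k : k.+1 < r -> s`_k < s`_k.+1 by move=> kr; rewrite ltn_nth // ltnW.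
split=> [[r0 [s0 s1] step step2 [last lastn]] | [[r0 s0 step lastn] [s1 step2 last]]].
- split; split=> //; [lia | by move=> k /step; lia | lia].
- split=> //; first by split=> //; have := lower0 r0; lia.
  + by move=> k kr; have := step k kr; have := gap k kr; lia.
  + by split=> //; have := upper r0; lia.
Qed.

End SortedWindows.

Lemma elts1_sorted n (F : {set 'I_n}) : sorted ltn (elts1 F).
Proof.
rewrite ltn_sorted_uniq_leq sort_uniq sort_sorted ?andbT; last exact: leq_total.
by rewrite map_inj_uniq ?enum_uniq // => a b /succn_inj /val_inj.
Qed.

Lemma elts1_range n (F : {set 'I_n}) : all (fun x => 0 < x <= n) (elts1 F).
Proof. by apply/allP => _ /elts1P [i _ ->]; rewrite /= ltn_ord. Qed.

Lemma size_elts1 n (F : {set 'I_n}) : size (elts1 F) = #|F|.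
Proof. by rewrite size_sort size_map -cardE. Qed.

Lemma minimal_transversal_It_Ln_Cnt n t F : 0 < t ->
  minimal_transversal (It_Ln_supps n t) F <-> in_Cnt n t F.
Proof.
move=> t_pos; rewrite minimal_transversal_It_Ln_windows in_CntE.
by rewrite (Cnt_seqP t_pos (elts1_sorted F) (elts1_range F)).
Qed.

(* 1, t+1, t+2, 2t+2, 2t+3, ...: the termwise smallest sequence allowed by
   conditions (1), (2) and (4). *)
Definition greedy t j := j./2 * t.+1 + (if odd j then t.+1 else 1).

Lemma greedy_double t i : greedy t (2 * i) = i * t.+1 + 1.
Proof. by rewrite /greedy mul2n doubleK odd_double. Qed.

Lemma greedy_doubleS t i : greedy t (2 * i).+1 = i.+1 * t.+1.
Proof. by rewrite /greedy mul2n /= uphalf_half odd_double doubleK mulSn addnC. Qed.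

Lemma greedySS t j : greedy t j.+2 = greedy t j + t.+1.
Proof. by rewrite /greedy /= negbK mulSn; lia. Qed.

Lemma greedy_gap t j : 0 < t -> greedy t j < greedy t j.+1 <= greedy t j + t.
Proof. by move=> t_pos; rewrite /greedy /= uphalf_half; case: (odd j) => /=; nia. Qed.

Lemma greedy_le_nth n t s : Cnt_seq n t s -> forall j, j < size s -> greedy t j <= nth 0 s j.
Proof.
case=> _ [s0 s1] _ step2 _; elim/ltn_ind => -[|[|j]] IH jr.
- by rewrite /greedy /=; lia.
- by rewrite /greedy /=; have := s1 jr; lia.
- by rewrite greedySS; have := IH j (ltnW (ltnSn _)) ltac:(lia); have := step2 j jr; lia.
Qed.

Definition max_gen_deg n t :=
  if n %% t.+1 < t then 2 * (n %/ t.+1) else (2 * (n %/ t.+1)).+1.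

Lemma leq_max_gen_deg n t r : t <= n -> 0 < r -> greedy t (r - 1) <= n ->
  (1 < r -> greedy t (r - 2) + t <= n) -> r <= max_gen_deg n t.
Proof.
rewrite /max_gen_deg; have en := divn_eq n t.+1; have := ltn_pmod n (ltn0Sn t).
move: (n %/ t.+1) (n %% t.+1) en => p q -> qt tn r0.
have [h [-> | ->]] : exists h, r = (2 * h).+1 \/ r = (2 * h).+2.
  by exists r.-1./2; lia.
- rewrite (_ : (2 * h).+1 - 1 = 2 * h) ?greedy_double => [_|]; last by lia.
  case: h => [|h] last; first by case: ifP; nia.
  rewrite (_ : (2 * h.+1).+1 - 2 = (2 * h).+1) ?greedy_doubleS in last; last by lia.
  by have := last isT; case: ifP; nia.
- rewrite (_ : (2 * h).+2 - 1 = (2 * h).+1) ?greedy_doubleS => [hl _|]; last by lia.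
  by case: ifP; nia.
Qed.

Lemma greedy_max_gen_deg n t : 0 < t -> t <= n ->
  let D := max_gen_deg n t in
  [/\ 0 < D, 1 < D -> greedy t (D - 2) + t <= n & n - t + 1 <= greedy t (D - 1) <= n].
Proof.
rewrite /max_gen_deg; have en := divn_eq n t.+1; have := ltn_pmod n (ltn0Sn t).
move: (n %/ t.+1) (n %% t.+1) en => p q -> qt t_pos tn /=.
case: ifP => qlt.
- case: p tn => [|p] tn; first by lia.
  rewrite (_ : 2 * p.+1 - 1 = (2 * p).+1) ?greedy_doubleS; last by lia.
  rewrite (_ : 2 * p.+1 - 2 = 2 * p) ?greedy_double; last by lia.
  by split=> [|_|]; nia.
- rewrite (_ : (2 * p).+1 - 1 = 2 * p) ?greedy_double; last by lia.
  case: p tn => [|p] tn.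
    by split=> //; nia.
  rewrite (_ : (2 * p.+1).+1 - 2 = (2 * p).+1) ?greedy_doubleS; last by lia.
  by split=> [|_|]; nia.
Qed.

Lemma Cnt_seq_size_le n t s : t <= n -> Cnt_seq n t s -> size s <= max_gen_deg n t.
Proof.
move=> tn C; have low := greedy_le_nth C; case: C => r0 _ _ _ [last lastn].
apply: leq_max_gen_deg => // [|r1].
- by have := low (size s - 1) ltac:(lia); lia.
- by have := low (size s - 2) ltac:(lia); have := last r1; lia.
Qed.

Lemma Cnt_seq_greedy n t : 0 < t -> t <= n ->
  Cnt_seq n t (mkseq (greedy t) (max_gen_deg n t)).
Proof.
move=> t_pos tn; have [D0 lastD lastnD] := greedy_max_gen_deg t_pos tn.
rewrite /Cnt_seq size_mkseq; split=> // [|k kD|k kD|].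
- by split=> [|D1]; rewrite nth_mkseq // /greedy /=; lia.
- by rewrite !nth_mkseq; [have := greedy_gap k t_pos; lia | lia | lia].
- by rewrite !nth_mkseq ?greedySS; lia.
- by rewrite !nth_mkseq; [split=> // D1; have := lastD D1; lia | lia | lia].
Qed.

Lemma Cnt_seq_sorted n t s : Cnt_seq n t s -> sorted ltn s /\ all (fun x => 0 < x <= n) s.
Proof.
case=> r0 [s0 _] gap _ [_ lastn].
have s_sorted : sorted ltn s by apply/(sortedP 0) => k kr; have := gap k kr; lia.
split=> //; apply/allP => _ /mem_nthP [j jr ->].
have : nth 0 s 0 <= nth 0 s j by rewrite leq_nth.
have : nth 0 s j <= nth 0 s (size s - 1) by rewrite leq_nth; lia.
lia.
Qed.

Lemma elts1_of n (s : seq nat) : sorted ltn s -> all (fun x => 0 < x <= n) s ->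
  elts1 [set i : 'I_n | i.+1 \in s] = s.
Proof.
move=> s_sorted s_range; rewrite -[RHS](sorted_sort leq_trans (sub_sorted ltnW s_sorted)).
apply/perm_sortP; [exact: leq_total | exact: leq_trans | exact: anti_leq |].
apply: uniq_perm; first by rewrite map_inj_uniq ?enum_uniq // => a b /succn_inj /val_inj.
  exact: (sorted_uniq ltn_trans ltnn s_sorted).
move=> x; apply/mapP/idP => [[i] | xs]; first by rewrite mem_enum inE => ? ->.
have /andP [x0 xn] := allP s_range x xs.
have xn' : x.-1 < n by lia.
by exists (Ordinal xn'); rewrite ?mem_enum ?inE /= prednK.
Qed.

Theorem corollary2p9 (n t : nat) (ht1 : 1 <= t) (htn : t <= n) :
  (forall m : monomial n,
     min_mgen (alex_dual_gens (It_Ln_supps n t)) m <->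
     exists2 F : {set 'I_n}, in_Cnt n t F & m = xF F) /\
  (let p := n %/ t.+1 in
   let q := n %% t.+1 in
   let D := if q < t then 2 * p else (2 * p).+1 in
   (exists2 m : monomial n,
      min_mgen (alex_dual_gens (It_Ln_supps n t)) m & mdeg m = D) /\
   (forall m : monomial n,
      min_mgen (alex_dual_gens (It_Ln_supps n t)) m -> mdeg m <= D)).
Proof.
have min_mgenP m : min_mgen (alex_dual_gens (It_Ln_supps n t)) m <->
    exists2 F, in_Cnt n t F & m = xF F.
  rewrite min_mgen_alex_dualP.
  by split=> -[F /(minimal_transversal_It_Ln_Cnt _ ht1) F_Cnt ->]; exists F.
split=> //; rewrite -/(max_gen_deg n t); split.
- set s := mkseq (greedy t) (max_gen_deg n t).
  have s_Cnt : Cnt_seq n t s := Cnt_seq_greedy ht1 htn.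
  have [s_sorted s_range] := Cnt_seq_sorted s_Cnt.
  exists (xF [set i : 'I_n | i.+1 \in s]).
    by apply/min_mgenP; exists [set i : 'I_n | i.+1 \in s]; rewrite ?in_CntE ?elts1_of.
  by rewrite mdeg_xF -size_elts1 elts1_of // size_mkseq.
- move=> _ /min_mgenP [F F_Cnt ->]; rewrite mdeg_xF -size_elts1.
  exact: Cnt_seq_size_le.
Qed.
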